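(* Let $(T,f,\sqsubseteq_L)$ be a leaf-ordered merge tree, and for $h\ge0$ let $\le_h$ on $\mathbb{L}_h$ be defined by $x_1\le_h x_2$ iff $x_1=x_2$ or $u_1\sqsubseteq_L u_2$ for all $u_1\in L(T_{x_1})$, $u_2\in L(T_{x_2})$. Then $(\le_h)_{h\ge0}$ is consistent: for all $0\le h_1\le h_2$ and $x_1,x_2\in\mathbb{L}_{h_1}$ with $x_1\le_{h_1}x_2$, we have $\mathrm{anc}_{h_2}(x_1)\le_{h_2}\mathrm{anc}_{h_2}(x_2)$.
   Context: A merge tree $(T,f)$: a finite rooted tree $T$ identified with its topological realisation, with a continuous $f\colon T\to\mathbb{R}\cup\{\infty\}$ strictly increasing towards the root, $f(v)=\infty$ iff $v$ is the root; lowest leaf at height $0$; $L(T)$ is the set of leaves and $L(T_x)$ the leaves in the subtree $T_x$ of descendants of $x$. $\mathrm{lca}$ is the lowest common ancestor; $\mathrm{anc}_h(x)$ is the unique ancestor of $x$ at height $h\ge f(x)$; $\mathbb{L}_h=\{x:f(x)=h\}$. A leaf-order is a total order $\sqsubseteq_L$ on $L(T)$ that separates subtrees: for leaves $u,u_1,u_2$ with $u_1\sqsubseteq_L u\sqsubseteq_L u_2$, $u\in T_{\mathrm{lca}(u_1,u_2)}$. A leaf-ordered merge tree is $(T,f,\sqsubseteq_L)$. *)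

From HB Require Import structures.
From mathcomp Require Import all_boot all_order all_algebra.
Set Implicit Arguments. Unset Strict Implicit. Unset Printing Implicit Defensive.
Import Order.TTheory GRing.Theory Num.Theory.
Local Open Scope ring_scope.

(* A finite rooted tree given by a parent map (the root is its own parent). *)
Definition vanc (V : finType) (par : V -> V) (w v : V) : Prop :=
  exists k : nat, iter k par v = w.

Definition is_leaf (V : finType) (r : V) (par : V -> V) (v : V) : Prop :=
  v <> r /\ forall w, par w <> v.

Record merge_tree (R : realFieldType) := MergeTree {
  mt_V :> finType;
  mt_root : mt_V;
  mt_par : mt_V -> mt_V;
  (* heights of non-root vertices; the root has height +infinity *)
  mt_f : mt_V -> R;
  mt_par_root : mt_par mt_root = mt_root;
  mt_rooted : forall v, vanc mt_par mt_root v;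
  mt_f_incr : forall v, v <> mt_root -> mt_par v <> mt_root ->
                mt_f v < mt_f (mt_par v);
  mt_lowest_leaf0 :
    (forall v, is_leaf mt_root mt_par v -> 0 <= mt_f v) /\
    (exists v, is_leaf mt_root mt_par v /\ mt_f v = 0)
}.

Section Points.
Variables (R : realFieldType) (T : merge_tree R).

Definition leaf (v : T) : Prop := is_leaf (mt_root T) (@mt_par R T) v.
Definition anc (w v : T) : Prop := vanc (@mt_par R T) w v.

(* A non-root point of the topological realisation: (v, h) is the point at
   height h on the edge from vertex v to its parent (h = f v is v itself). *)
Definition is_point (x : T * R) : Prop :=
  x.1 <> mt_root T /\ mt_f x.1 <= x.2 /\
  (mt_par x.1 = mt_root T \/ x.2 < mt_f (mt_par x.1)).

Definition in_level (h : R) (x : T * R) : Prop := is_point x /\ x.2 = h.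

Definition pdesc (y x : T * R) : Prop := anc x.1 y.1 /\ y.2 <= x.2.

Definition is_anc_at (h : R) (x y : T * R) : Prop :=
  in_level h y /\ pdesc x y.

Definition leaf_below (u : T) (x : T * R) : Prop :=
  leaf u /\ pdesc (u, mt_f u) x.

Definition is_lca (w u1 u2 : T) : Prop :=
  anc w u1 /\ anc w u2 /\ (forall z, anc z u1 -> anc z u2 -> anc z w).

(* leaf-order: total order on L(T) separating subtrees *)
Definition leaf_order (leL : rel T) : Prop :=
  (forall u, leaf u -> leL u u) /\
  (forall u1 u2, leaf u1 -> leaf u2 -> leL u1 u2 -> leL u2 u1 -> u1 = u2) /\
  (forall u1 u2 u3, leaf u1 -> leaf u2 -> leaf u3 ->
     leL u1 u2 -> leL u2 u3 -> leL u1 u3) /\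
  (forall u1 u2, leaf u1 -> leaf u2 -> leL u1 u2 \/ leL u2 u1) /\
  (forall u u1 u2 w, leaf u -> leaf u1 -> leaf u2 ->
     leL u1 u -> leL u u2 -> is_lca w u1 u2 -> anc w u).

Definition le_h (leL : rel T) (h : R) (x1 x2 : T * R) : Prop :=
  x1 = x2 \/
  (forall u1 u2, leaf_below u1 x1 -> leaf_below u2 x2 -> leL u1 u2).
End Points.

From mathcomp Require Import all_boot all_order all_algebra.
Import Order.TTheory GRing.Theory Num.Theory.
Set Implicit Arguments. Unset Strict Implicit.
Local Open Scope ring_scope.

(* Two distinct points y1, y2 of the same level have disjoint leaf sets, and
   the leaf set below a point is an interval of the leaf order (a leaf between
   two leaves of T_y lies below their lca, hence in T_y).  Take leaves a1, a2
   below x1, x2, so a1 <= a2, and also below y1, y2.  If some u1 below y1 and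
   u2 below y2 had u2 < u1, then either a1 <= u2 <= u1 puts u2 below y1, or
   u2 <= a1 <= a2 puts a1 below y2; both contradict disjointness. *)

Section MergeTreeFacts.
Variables (R : realFieldType) (T : merge_tree R).
Local Notation par := (@mt_par R T).
Local Notation root := (mt_root T).
Local Notation f := (@mt_f R T).

Lemma ancP (w v : T) : reflect (anc w v) (fconnect par v w).
Proof.
apply: (iffP idP) => [/iter_findex Ev | [k <-]]; last exact: fconnect_iter.
by exists (findex par v w).
Qed.

Lemma anc_trans (a b c : T) : anc a b -> anc b c -> anc a c.
Proof. by move=> [k <-] [j <-]; exists (k + j)%N; rewrite iterD. Qed.

Lemma iter_par_root k : iter k par root = root.
Proof. by elim: k => //= k ->; apply: mt_par_root. Qed.

Lemma anc_root (a : T) : anc a root -> a = root.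
Proof. by move=> [k <-]; rewrite iter_par_root. Qed.

Lemma anc_total (a b c : T) : anc a c -> anc b c -> anc a b \/ anc b a.
Proof.
move=> [k <-] [j <-]; case: (leqP k j) => [/subnK | /ltnW/subnK] Ekj.
- by right; exists (j - k)%N; rewrite -iterD Ekj.
- by left; exists (k - j)%N; rewrite -iterD Ekj.
Qed.

Lemma f_iter_par k (b : T) : iter k par b <> root -> f b <= f (iter k par b).
Proof.
elim: k => //= k IH Nk.
have Nk' : iter k par b <> root by move=> Ek; apply: Nk; rewrite Ek mt_par_root.
by apply: le_trans (IH Nk') (ltW (mt_f_incr Nk' Nk)).
Qed.

Lemma f_anc (a b : T) : anc a b -> a <> root -> f b <= f a.
Proof. by move=> [k <-]; apply: f_iter_par. Qed.

(* A vertex of minimal height among the descendants of v has no child. *)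
Lemma exists_leaf_desc (v : T) : v <> root -> exists2 u, leaf u & anc v u.
Proof.
move=> Nv; case: (arg_minP f (P := fun w => fconnect par w v) (connect0 _ v)).
move=> u /ancP Avu u_min; exists u => //.
have Nu : u <> root by move=> Eu; apply: Nv; apply: anc_root; rewrite -Eu.
split=> // w Ew.
have Nw : w <> root by move=> Er; apply: Nu; rewrite -Ew Er mt_par_root.
have Avw : anc v w by apply: anc_trans Avu _; exists 1%N.
have := mt_f_incr Nw; rewrite Ew => /(_ Nu).
by rewrite ltNge u_min //; apply/ancP.
Qed.

Lemma exists_lca (u1 u2 : T) : exists w, is_lca w u1 u2.
Proof.
have exP : exists k, fconnect par u2 (iter k par u1).
  by have [k Ek] := mt_rooted u1; exists k; rewrite Ek; apply/ancP/mt_rooted.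
case: (ex_minnP exP) => k /ancP A2 k_min.
exists (iter k par u1); split; first by exists k.
split=> // z [j Ej] /ancP A2z.
have /subnK Ekj : (k <= j)%N by apply: k_min; rewrite Ej.
by exists (j - k)%N; rewrite -iterD Ekj.
Qed.

Lemma eq_points_anc (y1 y2 : T * R) (v : T) :
  is_point y1 -> is_point y2 -> y1.2 = y2.2 -> anc y1.1 v -> anc y2.1 v ->
  y1 = y2.
Proof.
suff W (z1 z2 : T * R) : is_point z1 -> is_point z2 -> z1.2 = z2.2 ->
    anc z2.1 z1.1 -> z1 = z2.
  move=> P1 P2 E12 A1 A2.
  by case: (anc_total A1 A2) => A; [symmetry|]; apply: W.
case: z1 z2 => [a1 b1] [a2 b2] [/= N1 [F1 Q1]] [/= N2 [F2 _]] /= Eb [[|k] Ek].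
  by rewrite -Ek Eb.
rewrite iterSr in Ek; case: Q1 => [Ea1 | Lt1].
  by case: N2; rewrite -Ek Ea1 iter_par_root.
have := f_iter_par (b := par a1) (k := k); rewrite Ek => /(_ N2) Le.
by have := lt_le_trans Lt1 (le_trans Le F2); rewrite Eb ltxx.
Qed.

Lemma exists_leaf_below (x : T * R) : is_point x -> exists u, leaf_below u x.
Proof.
move=> [Nx [Fx _]]; have [u Lu Axu] := exists_leaf_desc Nx.
by exists u; split=> //; split=> //=; apply: le_trans (f_anc Axu Nx) Fx.
Qed.

Lemma leaf_below_pdesc (u : T) (x y : T * R) :
  leaf_below u x -> pdesc x y -> leaf_below u y.
Proof.
move=> [Lu [Axu Fu]] [Ayx Fx]; split=> //; split; first exact: anc_trans Axu.
exact: le_trans Fx.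
Qed.

Lemma leaf_below_disjoint (u : T) (y1 y2 : T * R) :
  is_point y1 -> is_point y2 -> y1.2 = y2.2 ->
  leaf_below u y1 -> leaf_below u y2 -> y1 = y2.
Proof. by move=> P1 P2 E [_ [A1 _]] [_ [A2 _]]; apply: eq_points_anc A1 A2. Qed.

Variable leL : rel T.
Hypothesis leL_order : leaf_order leL.

Lemma leaf_below_between (y : T * R) (p q r : T) :
  is_point y -> leaf_below p y -> leaf_below r y -> leaf q ->
  leL p q -> leL q r -> leaf_below q y.
Proof.
case: leL_order => _ [_ [_ [_ sep]]] [Ny [Fy _]] [Lp [Ayp _]] [Lr [Ayr _]] Lq pq qr.
have [w [Awp [Awr w_lca]]] := exists_lca p r.
have Ayq : anc y.1 q.
  by apply: anc_trans (w_lca _ Ayp Ayr) (sep _ _ _ w Lq Lp Lr pq qr _).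
by split=> //; split=> //=; apply: le_trans (f_anc Ayq Ny) Fy.
Qed.

Lemma leL_leaves_below (y1 y2 : T * R) (a1 a2 u1 u2 : T) :
  is_point y1 -> is_point y2 -> y1.2 = y2.2 -> y1 <> y2 ->
  leaf_below a1 y1 -> leaf_below a2 y2 -> leL a1 a2 ->
  leaf_below u1 y1 -> leaf_below u2 y2 -> leL u1 u2.
Proof.
move=> P1 P2 E12 N12 B1 B2 a12 Bu1 Bu2.
have disj u : leaf_below u y1 -> leaf_below u y2 -> False.
  by move=> D1 D2; apply: N12; apply: leaf_below_disjoint D1 D2.
case: leL_order => _ [_ [_ [total _]]].
have [La1 _] := B1; have [Lu1 _] := Bu1; have [Lu2 _] := Bu2.
case: (total u1 u2 Lu1 Lu2) => [// | u21]; exfalso.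
case: (total a1 u2 La1 Lu2) => [a1u2 | u2a1].
- by apply: (disj u2) => //; apply: leaf_below_between B1 Bu1 Lu2 a1u2 u21.
- by apply: (disj a1) => //; apply: leaf_below_between Bu2 B2 La1 u2a1 a12.
Qed.

End MergeTreeFacts.

Theorem lemma6 (R : realFieldType) (T : merge_tree R) (leL : rel T) :
  leaf_order leL ->
  forall (h1 h2 : R) (x1 x2 y1 y2 : T * R),
    0 <= h1 -> h1 <= h2 ->
    in_level h1 x1 -> in_level h1 x2 ->
    le_h leL h1 x1 x2 ->
    is_anc_at h2 x1 y1 -> is_anc_at h2 x2 y2 ->
    le_h leL h2 y1 y2.
Proof.
move=> LO h1 h2 x1 x2 y1 y2 _ _ [Px1 _] [Px2 _] le12.
move=> [[Py1 Ey1] D1] [[Py2 Ey2] D2].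
have Ey12 : y1.2 = y2.2 by rewrite Ey1 Ey2.
case: le12 => [Ex | x12].
  by left; subst x2; apply: (eq_points_anc (v := x1.1)) => //; [case: D1 | case: D2].
case: (y1 =P y2) => [| Ny]; first by left.
have [a1 B1] := exists_leaf_below Px1.
have [a2 B2] := exists_leaf_below Px2.
right=> u1 u2; apply: (leL_leaves_below LO Py1 Py2 Ey12 Ny
  (leaf_below_pdesc B1 D1) (leaf_below_pdesc B2 D2)).
exact: x12.
Qed.
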